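(* Let $m\ge2$. For every $P_0\in\mathfrak P$ and every neighborhood $\mathcal O\subseteq\mathbb R^{nm\times n}$ of $P_0$ there exist $P_1,P_2\in\mathcal O\cap\mathfrak P$ such that $\operatorname{rank}[E-\gamma P_1,\ E-\gamma P_2]=2n-1$; equivalently, $$\operatorname{span}(E-\gamma P_1)\cap\operatorname{span}(E-\gamma P_2)=\operatorname{span}(\mathbf 1_{nm}).$$
   Context: $n,m\ge1$ integers, $\gamma\in(0,1)$. $\mathfrak P$ is the set of matrices $P\in\mathbb R^{nm\times n}$ with nonnegative entries and rows summing to one (rows indexed by state-action pairs ordered as $(s_1,a_1),\dots,(s_n,a_1),(s_1,a_2),\dots,(s_n,a_m)$). $E=[I_n,\dots,I_n]^\top\in\mathbb R^{nm\times n}$. $\operatorname{span}(B)$ denotes the column span of $B$; $\mathbf 1_{nm}$ is the all-ones vector. *)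

From HB Require Import structures.
From mathcomp Require Import all_boot all_order all_algebra.
From mathcomp Require Import all_classical all_reals all_analysis.
Set Implicit Arguments. Unset Strict Implicit. Unset Printing Implicit Defensive.
Import Order.TTheory GRing.Theory Num.Theory.
Import numFieldNormedType.Exports.
Local Open Scope ring_scope.

(* Row k : 'I_(n*m) encodes the state-action pair (s_{k mod n}, a_{k div n}),
   matching the ordering (s_1,a_1),...,(s_n,a_1),(s_1,a_2),...,(s_n,a_m). *)

Definition stochastic (R : realType) (n m : nat) (P : 'M[R]_(n * m, n)) : Prop :=
  (forall k i, 0 <= P k i) /\ (forall k, \sum_(i < n) P k i = 1).

(* E = [I_n, ..., I_n]^T (m copies stacked vertically). *)
Definition Emx (R : realType) (n m : nat) : 'M[R]_(n * m, n) :=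
  \matrix_(k < n * m, i < n) ((k %% n)%N == i)%:R.

From HB Require Import structures.
From mathcomp Require Import all_boot all_order all_algebra.
From mathcomp Require Import all_classical all_reals all_analysis.
From mathcomp Require Import ring lra zify.
Set Implicit Arguments. Unset Strict Implicit. Unset Printing Implicit Defensive.
Import Order.TTheory GRing.Theory Num.Theory.
Import numFieldNormedType.Exports.
Local Open Scope ring_scope.

(* Write A = [E - g P1, E - g P2] with g = gamma.  Since A has
   2n columns, rank A = 2n - 1 amounts to the null space of A being a line.
   It always contains (1; -1), because each E - g P maps the all-ones vector
   to (1 - g) times itself.  We build P1 and P2 from P0 by changing only the
   rows of the second action a_2, moving them a small fraction eps towards
   the uniform distribution (P1) and towards E (P2).  If (x; y) is in the null
   space, the a_1-rows give x + y = g P0 (x + y) on them, so x + y = 0 by a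
   sup-norm contraction argument; the a_2-rows then give
   g eps (avg x - x_j) = 0, so x is constant. *)

(* Discounted fixed points vanish: if z = g * P z with P a stochastic kernel
   and 0 <= g < 1, then z = 0, because the sup-norm of z is at most g times
   itself. *)
Lemma discounted_fixpoint_eq0 (R : realFieldType) (I : finType) (g : R)
    (p : I -> I -> R) (z : I -> R) :
  0 <= g -> g < 1 -> (forall j i, 0 <= p j i) -> (forall j, \sum_i p j i = 1) ->
  (forall j, z j = g * \sum_i p j i * z i) -> forall j, z j = 0.
Proof.
move=> g0 g1 p0 p1 hz.
set M := \big[Num.max/0]_i `|z i|.
have hM i : `|z i| <= M by exact: le_bigmax.
have M0 : 0 <= M by rewrite /M bigmax_idl le_max lexx.
have MgM : M <= g * M.
  apply: bigmax_le; first by rewrite mulr_ge0.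
  move=> j _; rewrite hz normrM ger0_norm //; apply: ler_wpM2l => //.
  apply: le_trans (ler_norm_sum _ _ _) _.
  rewrite -[M]mul1r -(p1 j) mulr_suml; apply: ler_sum => i _.
  by rewrite normrM ger0_norm // ler_wpM2l.
have M_le0 : M <= 0 by nra.
by move=> j; apply/normr0_eq0/eqP; rewrite eq_le normr_ge0 andbT (le_trans (hM j)).
Qed.

Lemma rank_null_line (F : fieldType) (r q : nat) (A : 'M[F]_(r, q)) (w : 'cV_q) :
  w != 0 -> A *m w = 0 -> (forall v, A *m v = 0 -> exists c, v = c *: w) ->
  \rank A = q.-1.
Proof.
move=> w_neq0 Aw0 null_line.
have wK : (w^T <= kermx A^T)%MS by apply/sub_kermxP; rewrite -trmx_mul Aw0 trmx0.
have Kw : (kermx A^T <= w^T)%MS.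
  apply/row_subP => i; apply/sub_rVP.
  have /sub_kermxP uK := row_sub i (kermx A^T).
  have [c uE] : exists c, (row i (kermx A^T))^T = c *: w.
    by apply: null_line; rewrite -[LHS]trmxK trmx_mul trmxK uK trmx0.
  by exists c; rewrite -[LHS]trmxK uE linearZ.
have rankK : \rank (kermx A^T) = 1%N.
  have rank_w : \rank w^T = 1%N by rewrite rank_rV trmx_eq0 w_neq0.
  by apply/eqP; rewrite eqn_leq -{1 2}rank_w !mxrankS.
by move: (mxrank_ker A^T); rewrite rankK mxrank_tr; have := rank_leq_col A; lia.
Qed.

Section StochasticMatrices.
Variables (R : realType) (n m : nat).
Implicit Types (P Q : 'M[R]_(n * m, n)) (x : 'cV[R]_n).

Lemma mulmx_const1 P k : (P *m (const_mx 1 : 'cV_n)) k 0 = \sum_i P k i.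
Proof. by rewrite mxE; apply: eq_bigr => i _; rewrite mxE mulr1. Qed.

Lemma stochastic_mulmx1 P : stochastic P -> P *m (const_mx 1 : 'cV_n) = const_mx 1.
Proof. by case=> _ P1; apply/matrixP => k j; rewrite ord1 mulmx_const1 P1 mxE. Qed.

Lemma stochastic_le1 P k i : stochastic P -> P k i <= 1.
Proof. by case=> P0 P1; rewrite -(P1 k) (bigD1 i) //= lerDl sumr_ge0. Qed.

Definition mix_rows (S : pred 'I_(n * m)) (eps : R) P Q : 'M[R]_(n * m, n) :=
  \matrix_(k, i) if S k then (1 - eps) * P k i + eps * Q k i else P k i.

Lemma stochastic_mix S eps P Q :
  0 <= eps <= 1 -> stochastic P -> stochastic Q -> stochastic (mix_rows S eps P Q).
Proof.
move=> /andP[eps0 eps1] [P0 P1] [Q0 Q1]; split=> k.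
  move=> i; rewrite mxE; case: (S k) => //.
  by rewrite addr_ge0 ?mulr_ge0 ?subr_ge0.
under eq_bigr do rewrite mxE; case: (S k); last exact: P1.
by rewrite big_split /= -!mulr_sumr P1 Q1; ring.
Qed.

(* Mixing moves each entry by at most eps, since all entries lie in [0, 1]. *)
Lemma mix_rows_dist S eps P Q k i :
  0 <= eps -> stochastic P -> stochastic Q -> `|P k i - mix_rows S eps P Q k i| <= eps.
Proof.
move=> eps0 hP hQ; rewrite mxE; case: (S k); last by rewrite subrr normr0.
have [P0 P1] := (hP.1 k i, stochastic_le1 k i hP).
have [Q0 Q1] := (hQ.1 k i, stochastic_le1 k i hQ).
have -> : P k i - ((1 - eps) * P k i + eps * Q k i) = eps * (P k i - Q k i) by ring.
by rewrite normrM ger0_norm // ler_piMr // ler_norml; apply/andP; split; lra.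
Qed.

Lemma mix_rows_mulmx S eps P Q x k :
  (mix_rows S eps P Q *m x) k 0 =
  if S k then (1 - eps) * (P *m x) k 0 + eps * (Q *m x) k 0 else (P *m x) k 0.
Proof.
rewrite !mxE; under eq_bigr do rewrite mxE; case: (S k) => //.
by rewrite !mulr_sumr -big_split /=; apply: eq_bigr => i _; ring.
Qed.

Lemma discounted_mulmx1 (g : R) D P : stochastic D -> stochastic P ->
  (D - g *: P) *m (const_mx 1 : 'cV_n) = (1 - g) *: const_mx 1.
Proof.
by move=> hD hP; rewrite mulmxBl -scalemxAl !stochastic_mulmx1 // scalerBl scale1r.
Qed.

Definition uniform_mx : 'M[R]_(n * m, n) := const_mx n%:R^-1.

Lemma uniform_mx_mulmx x k : (uniform_mx *m x) k 0 = (\sum_i x i 0) / n%:R.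
Proof. by rewrite mxE mulr_suml; apply: eq_bigr => i _; rewrite mxE mulrC. Qed.

Lemma stochastic_uniform : (0 < n)%N -> stochastic uniform_mx.
Proof.
move=> n_gt0; split=> [k i|k]; first by rewrite mxE invr_ge0 ler0n.
rewrite -mulmx_const1 uniform_mx_mulmx.
under eq_bigr do rewrite mxE.
by rewrite sumr_const card_ord -[_ *+ n]mulr_natr mul1r divff // pnatr_eq0 -lt0n.
Qed.

End StochasticMatrices.

Section StateActionRows.
Variables (R : realType) (n m : nat).

Lemma Emx_mulmx (x : 'cV[R]_n) (k : 'I_(n * m)) (j : 'I_n) :
  (k %% n)%N = j -> (Emx R n m *m x) k 0 = x j 0.
Proof.
move=> kj; rewrite mxE (bigD1 j) //= mxE kj eqxx mul1r big1 ?addr0 // => i ij.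
by rewrite mxE kj val_eqE eq_sym (negbTE ij) mul0r.
Qed.

Lemma stochastic_Emx : (0 < n)%N -> stochastic (Emx R n m).
Proof.
move=> n_gt0; split=> [k i|k]; first by rewrite mxE ler0n.
by rewrite -mulmx_const1 (@Emx_mulmx _ k (Ordinal (ltn_pmod k n_gt0))) // mxE.
Qed.

Lemma pair_row_subproof (a : 'I_m) (j : 'I_n) : (a * n + j < n * m)%N.
Proof. by have := ltn_ord a; have := ltn_ord j; nia. Qed.

Definition pair_row (a : 'I_m) (j : 'I_n) : 'I_(n * m) :=
  Ordinal (pair_row_subproof a j).

Lemma pair_row_div a j : (pair_row a j %/ n)%N = a.
Proof.
have n_gt0 : (0 < n)%N by apply: leq_ltn_trans (ltn_ord j).
by rewrite /= divnMDl // divn_small ?addn0.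
Qed.

Lemma pair_row_mod a j : (pair_row a j %% n)%N = j.
Proof. by rewrite /= modnMDl modn_small. Qed.

End StateActionRows.

Section PerturbedPair.
Variables (R : realType) (n m : nat) (g eps : R) (P0 : 'M[R]_(n * m, n)).
Hypotheses (m_gt1 : (1 < m)%N) (g_gt0 : 0 < g) (g_lt1 : g < 1) (eps_gt0 : 0 < eps)
  (hP0 : stochastic P0).

Definition second_action : pred 'I_(n * m) := fun k => (k %/ n == 1)%N.

Definition P_unif : 'M[R]_(n * m, n) :=
  mix_rows second_action eps P0 (uniform_mx R n m).
Definition P_diag : 'M[R]_(n * m, n) :=
  mix_rows second_action eps P0 (Emx R n m).

(* The actions a_1 and a_2, as indices 0 and 1 in 'I_m. *)
Let a0 : 'I_m := Ordinal (ltn_trans (ltn0Sn 0) m_gt1).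
Let a1 : 'I_m := Ordinal m_gt1.

(* A vector (x; y) in the null space of [E - g P_unif, E - g P_diag] has
   y = -x (from the a_1-rows, by the discounted fixed point lemma) and x
   constant (from the a_2-rows, where the two perturbations differ). *)
Lemma null_space_perturbed (x y : 'cV[R]_n) :
  (Emx R n m - g *: P_unif) *m x + (Emx R n m - g *: P_diag) *m y = 0 ->
  y = - x /\ x = ((\sum_i x i 0) / n%:R) *: const_mx 1.
Proof.
move=> null_xy.
have row_eq (k : 'I_(n * m)) (j : 'I_n) : (k %% n)%N = j ->
    (x + y) j 0 = g * ((P_unif *m x) k 0 + (P_diag *m y) k 0).
  move=> kj; move/matrixP/(_ k 0): null_xy.
  rewrite !mulmxBl -!scalemxAl addrACA -opprD -mulmxDr -scalerDr.
  rewrite mxE [X in _ + X]mxE [X in _ + - X]mxE [X in _ * X]mxE (Emx_mulmx _ kj).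
  by rewrite [X in _ = X]mxE => /eqP; rewrite subr_eq0 => /eqP.
have xy0 : x + y = 0.
  apply/matrixP => j c; rewrite ord1 [RHS]mxE.
  apply: (discounted_fixpoint_eq0 (g := g) (p := fun j i => P0 (pair_row a0 j) i)
    (z := fun j => (x + y) j 0)) => //; first exact: ltW.
  - by move=> ? ?; exact: hP0.1.
  - by move=> ?; exact: hP0.2.
  move=> {}j; rewrite (row_eq _ _ (pair_row_mod a0 j)) !mix_rows_mulmx.
  rewrite /second_action pair_row_div /= !mxE -big_split /=.
  by congr (_ * _); apply: eq_bigr => i _; rewrite mxE mulrDr.
have yE : y = - x by apply/eqP; rewrite -addr_eq0 addrC xy0.
split=> //; apply/matrixP => j c; rewrite ord1 !mxE mulr1.
set k := pair_row a1 j; set avg := _ / n%:R.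
have P0xy : (P0 *m x + P0 *m y) k 0 = 0 by rewrite -mulmxDr xy0 mulmx0 mxE.
have yj : y j 0 = - x j 0 by rewrite yE mxE.
rewrite mxE in P0xy.
have := row_eq _ _ (pair_row_mod a1 j).
rewrite xy0 !mix_rows_mulmx /second_action pair_row_div eqxx mxE.
rewrite uniform_mx_mulmx (Emx_mulmx _ (pair_row_mod a1 j)) -/avg yj => row_a2.
have : (g * eps) * (avg - x j 0) = 0 by nra.
by move/eqP; rewrite !mulf_eq0 (gt_eqF g_gt0) (gt_eqF eps_gt0) subr_eq0 => /eqP.
Qed.

(* Both perturbations are discounted stochastic matrices, so (1; -1) lies in
   the null space; by null_space_perturbed it spans it, hence corank one. *)
Lemma rank_perturbed_pair : (0 < n)%N -> eps <= 1 ->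
  \rank (row_mx (Emx R n m - g *: P_unif) (Emx R n m - g *: P_diag)) = (2 * n - 1)%N.
Proof.
move=> n_gt0 eps_le1.
have eps01 : 0 <= eps <= 1 by rewrite eps_le1 ltW.
have hE := stochastic_Emx R m n_gt0.
have hPu : stochastic P_unif := stochastic_mix _ eps01 hP0 (stochastic_uniform R m n_gt0).
have hPd : stochastic P_diag := stochastic_mix _ eps01 hP0 hE.
pose one : 'cV[R]_n := const_mx 1.
have one_neq0 : one != 0.
  by apply/eqP => /matrixP/(_ (Ordinal n_gt0) 0); rewrite !mxE; apply/eqP; rewrite oner_eq0.
rewrite (@rank_null_line _ _ _ _ (col_mx one (- one))).
- by lia.
- by rewrite col_mx_eq0 negb_and one_neq0.
- by rewrite mul_row_col mulmxN !discounted_mulmx1 // subrr.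
move=> v; rewrite -[v]vsubmxK mul_row_col => /null_space_perturbed[-> ->].
by eexists; rewrite scale_col_mx scalerN.
Qed.

End PerturbedPair.

Theorem mainTheorem16 (R : realType) (n m : nat) (gamma : R)
  (hn : (1 <= n)%N) (hm : (2 <= m)%N) (hg0 : 0 < gamma) (hg1 : gamma < 1)
  (P0 : 'M[R]_(n * m, n)) (hP0 : stochastic P0)
  (O : set 'M[R]_(n * m, n)) (hO : nbhs P0 O) :
  exists P1 P2 : 'M[R]_(n * m, n),
    [/\ O P1, stochastic P1, O P2, stochastic P2 &
        \rank (row_mx (Emx R n m - gamma *: P1) (Emx R n m - gamma *: P2))
          = (2 * n - 1)%N].
Proof.
move/nbhs_ballP: hO => [e /= e_gt0 ball_sub].
pose eps := Num.min (e / 2) 1.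
have eps_gt0 : 0 < eps by rewrite lt_min ltr01 andbT; lra.
have eps_le1 : eps <= 1 by rewrite ge_min lexx orbT.
have eps_lt_e : eps < e by rewrite gt_min; apply/orP; left; lra.
have eps01 : 0 <= eps <= 1 by rewrite eps_le1 ltW.
have mix_in_O (Q : 'M[R]_(n * m, n)) :
  stochastic Q -> O (mix_rows (@second_action n m) eps P0 Q).
  move=> hQ; apply: ball_sub; split=> // k i.
  exact: le_lt_trans (mix_rows_dist _ _ _ (ltW eps_gt0) hP0 hQ) eps_lt_e.
exists (P_unif eps P0), (P_diag eps P0); split.
- exact/mix_in_O/stochastic_uniform.
- exact/stochastic_mix/stochastic_uniform.
- exact/mix_in_O/stochastic_Emx.
- exact/stochastic_mix/stochastic_Emx.
- exact: rank_perturbed_pair.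
Qed.
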